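(* Let $\Gamma$ be a finitely generated torsion-free nilpotent group whose center $Z(\Gamma)$ is isomorphic to $\mathbb{Z}$. If $\Gamma$ is self-similar, then $\Gamma$ is transitive self-similar.
   Context: For a finite alphabet $A$, an action of $\Gamma$ on the space $A^\omega$ of infinite words is self-similar if for all $\gamma\in\Gamma$, $a\in A$ there are $\gamma_a\in\Gamma$, $b\in A$ with $\gamma(aw)=b\gamma_a(w)$ for all $w\in A^\omega$; it is transitive if the induced action on $A$ is transitive. $\Gamma$ is self-similar (resp. transitive self-similar) if it admits a faithful self-similar action (resp. a faithful transitive self-similar action) on $A^\omega$ for some finite $A$. *)

From Stdlib Require Import ZArith.
From mathcomp Require Import all_boot.

Set Implicit Arguments.
Unset Strict Implicit.
Unset Printing Implicit Defensive.

Record group := Group {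
  gcar :> Type;
  gmul : gcar -> gcar -> gcar;
  gone : gcar;
  ginv : gcar -> gcar;
  gmulA : forall x y z, gmul x (gmul y z) = gmul (gmul x y) z;
  gmul1g : forall x, gmul gone x = x;
  gmulVg : forall x, gmul (ginv x) x = gone
}.

Section GroupDefs.
Variable G : group.

Fixpoint gpow (g : G) (n : nat) : G :=
  match n with O => gone G | S k => gmul g (gpow g k) end.

Definition gzpow (g : G) (z : Z) : G :=
  match z with
  | Z0 => gone G
  | Zpos p => gpow g (Pos.to_nat p)
  | Zneg p => ginv (gpow g (Pos.to_nat p))
  end.

Inductive gen (S : G -> Prop) : G -> Prop :=
  | gen_base x : S x -> gen S x
  | gen_one : gen S (gone G)
  | gen_mul x y : gen S x -> gen S y -> gen S (gmul x y)
  | gen_inv x : gen S x -> gen S (ginv x).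

Definition finitely_generated : Prop :=
  exists l : list G, forall g, gen (fun x => List.In x l) g.

Definition torsion_free : Prop :=
  forall (g : G) (n : nat), gpow g n.+1 = gone G -> g = gone G.

Definition commutator (x y : G) : G :=
  gmul (gmul (ginv x) (ginv y)) (gmul x y).

Fixpoint lcs (i : nat) : G -> Prop :=
  match i with
  | O => fun _ => True
  | S k => gen (fun c => exists x y, lcs k x /\ c = commutator x y)
  end.

Definition nilpotent : Prop :=
  exists c : nat, forall g, lcs c g -> g = gone G.

Definition center (z : G) : Prop := forall g : G, gmul z g = gmul g z.

(** Z(G) is isomorphic to Z: some central z0 such that n |-> z0^n is an
    injective homomorphism Z -> Z(G) whose image is all of Z(G). *)
Definition center_iso_Z : Prop :=
  exists z0 : G, center z0 /\
    (forall m n : Z, gzpow z0 m = gzpow z0 n -> m = n) /\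
    (forall z : G, center z -> exists n : Z, z = gzpow z0 n).

End GroupDefs.

Definition scons (A : Type) (a : A) (w : nat -> A) : nat -> A :=
  fun n => match n with O => a | S k => w k end.

Section Actions.
Variables (G : group) (A : finType).

Definition is_action (act : G -> (nat -> A) -> (nat -> A)) : Prop :=
  (forall w, act (gone G) w = w) /\
  (forall g h w, act (gmul g h) w = act g (act h w)).

Definition faithful_action (act : G -> (nat -> A) -> (nat -> A)) : Prop :=
  forall g, (forall w, act g w = w) -> g = gone G.

Definition self_similar_action (act : G -> (nat -> A) -> (nat -> A)) : Prop :=
  forall (g : G) (a : A), exists (ga : G) (b : A),
    forall w, act g (scons a w) = scons b (act ga w).

(** the induced action on A (first letters) is transitive *)
Definition transitive_action (act : G -> (nat -> A) -> (nat -> A)) : Prop :=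
  forall a b : A, exists g : G, forall w, act g (scons a w) 0 = b.

End Actions.

Definition self_similar (G : group) : Prop :=
  exists (A : finType) (act : G -> (nat -> A) -> (nat -> A)),
    is_action act /\ faithful_action act /\ self_similar_action act.

Definition transitive_self_similar (G : group) : Prop :=
  exists (A : finType) (act : G -> (nat -> A) -> (nat -> A)),
    is_action act /\ faithful_action act /\ self_similar_action act /\
    transitive_action act.

From Stdlib Require Import ZArith Lia Classical ClassicalEpsilon FunctionalExtensionality Wf_nat.
From mathcomp Require Import all_boot.

Set Implicit Arguments.
Unset Strict Implicit.
Unset Printing Implicit Defensive.

(* Let G act faithfully and self-similarly on A^omega and let z generate Z(G) = Z.  For a
   letter b with orbit X, a transversal (t_x b = x) yields a transitive self-similar action
   of G on X^omega: g moves first letters as on A and has section (t_{g x}^-1 g t_x)|_b at x.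
   Suppose none of these actions is faithful.  Each kernel K_b is then a nontrivial normal
   subgroup of the nilpotent group G, so it meets Z(G); let z^d generate K_b ∩ <z>.
   If c is the nilpotency class minus one, the central subgroup gamma_c(G) contains a
   nontrivial iterated commutator of letter-fixing elements (multilinearity and
   torsion-freeness); its sections are iterated commutators of sections, hence central.
   It is a power z^m, and since (z^d)^m = (z^m)^d the section of z^d at b has a central
   power, so it is central by torsion-freeness.  Lying in K_b, it is a power of z^d.  For L a
   common multiple of the exponents d, every section of z^L is a power of z^L, so z^L acts
   trivially on A^omega, contradicting faithfulness. *)

Local Notation "x ** y" := (gmul x y) (at level 40, left associativity).
Local Notation "x ^-1" := (ginv x).

Section GroupIdentities.
Variable G : group.
Local Notation one := (gone G).
Implicit Types x y z : G.

Lemma mulgV x : x ** x^-1 = one.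
Proof.
rewrite -[x ** x^-1]gmul1g -[in X in X ** _](gmulVg (x^-1)).
by rewrite -gmulA [x^-1 ** (x ** x^-1)]gmulA gmulVg gmul1g gmulVg.
Qed.

Lemma mulg1 x : x ** one = x.
Proof. by rewrite -(gmulVg x) gmulA mulgV gmul1g. Qed.

Lemma mulKg x y : x^-1 ** (x ** y) = y.
Proof. by rewrite gmulA gmulVg gmul1g. Qed.

Lemma mulVKg x y : x ** (x^-1 ** y) = y.
Proof. by rewrite gmulA mulgV gmul1g. Qed.

Lemma mulgI x y z : x ** y = x ** z -> y = z.
Proof. by move=> e; rewrite -[y](mulKg x) e mulKg. Qed.

Lemma mulIg x y z : y ** x = z ** x -> y = z.
Proof. by move=> e; rewrite -[y]mulg1 -(mulgV x) gmulA e -gmulA mulgV mulg1. Qed.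

Lemma invg_uniq x y : x ** y = one -> y = x^-1.
Proof. by move=> e; rewrite -[y](mulKg x) e mulg1. Qed.

Lemma invgK x : (x^-1)^-1 = x.
Proof. by symmetry; apply: invg_uniq; rewrite gmulVg. Qed.

Lemma invMg x y : (x ** y)^-1 = y^-1 ** x^-1.
Proof. by symmetry; apply: invg_uniq; rewrite -gmulA mulVKg mulgV. Qed.

Lemma invg1 : one^-1 = one.
Proof. by symmetry; apply: invg_uniq; rewrite gmul1g. Qed.

Lemma mulgV_eq1 x y : x ** y^-1 = one -> x = y.
Proof. by move=> e; apply: (@mulIg (y^-1)); rewrite e mulgV. Qed.

End GroupIdentities.

Ltac gsimpl := repeat progress
  (rewrite ?invMg ?invgK ?invg1 -?gmulA ?mulKg ?mulVKg ?gmulVg ?mulgV ?gmul1g ?mulg1).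

Section Powers.
Variable G : group.
Local Notation one := (gone G).
Implicit Types g : G.

Lemma gpowD g m n : gpow g (m + n) = gpow g m ** gpow g n.
Proof. by elim: m => [|m IH] /=; rewrite ?gmul1g // IH gmulA. Qed.

Lemma gpowSr g n : gpow g n.+1 = gpow g n ** g.
Proof. by rewrite -addn1 gpowD /= mulg1. Qed.

Lemma gzpow_nat g n : gzpow g (Z.of_nat n) = gpow g n.
Proof. by case: n => [|n] //=; rewrite SuccNat2Pos.id_succ. Qed.

Lemma gzpow_oppnat g n : gzpow g (- Z.of_nat n) = (gpow g n)^-1.
Proof. by case: n => [|n] /=; rewrite ?invg1 // SuccNat2Pos.id_succ. Qed.

Lemma gzpowS g k : gzpow g (Z.succ k) = g ** gzpow g k.
Proof.
have [n [->|->]] : exists n, k = Z.of_nat n \/ k = (- Z.of_nat n.+1)%Z.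
  case: k => [|p|p]; first by exists 0%N; left.
    by exists (Pos.to_nat p); left; rewrite positive_nat_Z.
  exists (Pos.to_nat p).-1; right.
  by rewrite prednK ?positive_nat_Z //; apply/ltP; apply: Pos2Nat.is_pos.
  by rewrite -Nat2Z.inj_succ !gzpow_nat.
have -> : (Z.succ (- Z.of_nat n.+1) = - Z.of_nat n)%Z by lia.
by rewrite !gzpow_oppnat gpowSr invMg mulVKg.
Qed.

Lemma gzpowP g k : gzpow g (Z.pred k) = g^-1 ** gzpow g k.
Proof. by rewrite -{2}(Z.succ_pred k) gzpowS mulKg. Qed.

Lemma gzpowD g k l : gzpow g (k + l) = gzpow g k ** gzpow g l.
Proof.
elim/Z.peano_ind: k => [|k IH|k IH]; first by rewrite gmul1g.
  by rewrite Z.add_succ_l !gzpowS IH gmulA.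
by rewrite Z.add_pred_l !gzpowP IH gmulA.
Qed.

Lemma gzpowN g k : gzpow g (- k) = (gzpow g k)^-1.
Proof. by apply: invg_uniq; rewrite -gzpowD Z.add_opp_diag_r. Qed.

Lemma gzpow1 g : gzpow g 1 = g.
Proof. by rewrite /= mulg1. Qed.

Lemma gzpowM g k l : gzpow (gzpow g k) l = gzpow g (k * l).
Proof.
elim/Z.peano_ind: l => [|l IH|l IH]; first by rewrite Z.mul_0_r.
  by rewrite gzpowS IH Z.mul_succ_r Z.add_comm gzpowD.
by rewrite gzpowP IH Z.mul_pred_r -gzpowN -gzpowD Z.add_comm.
Qed.

End Powers.

Fixpoint itercomm (G : group) (u : G) (vs : seq G) : G :=
  if vs is v :: vs' then itercomm (commutator u v) vs' else u.

Section SubgroupMorphism.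
Variables (G : group) (H : G -> Prop) (f : G -> G).
Local Notation one := (gone G).
Hypotheses (H1 : H one) (HM : forall x y, H x -> H y -> H (x ** y))
           (HV : forall x, H x -> H x^-1).
Hypothesis fM : forall x y, H x -> H y -> f (x ** y) = f x ** f y.

Lemma morph1 : f one = one.
Proof. by apply: (@mulgI _ (f one)); rewrite -fM // gmul1g mulg1. Qed.

Lemma morphV x : H x -> f x^-1 = (f x)^-1.
Proof. by move=> Hx; apply: invg_uniq; rewrite -fM ?mulgV ?morph1; auto. Qed.

Lemma subgroup_gpow x n : H x -> H (gpow x n).
Proof. by move=> Hx; elim: n => [|n IH] //=; apply: HM. Qed.

Lemma morph_gpow x n : H x -> f (gpow x n) = gpow (f x) n.
Proof.
move=> Hx; elim: n => [|n IH] /=; first exact: morph1.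
by rewrite fM ?IH //; apply: subgroup_gpow.
Qed.

Lemma subgroup_gzpow x k : H x -> H (gzpow x k).
Proof. by move=> Hx; case: k => [|p|p] //=; [|apply: HV]; apply: subgroup_gpow. Qed.

Lemma morph_gzpow x k : H x -> f (gzpow x k) = gzpow (f x) k.
Proof.
move=> Hx; case: k => [|p|p] /=; first exact: morph1.
  exact: morph_gpow.
by rewrite morphV ?morph_gpow //; apply: subgroup_gpow.
Qed.

Lemma subgroup_comm x y : H x -> H y -> H (commutator x y).
Proof. by move=> Hx Hy; apply: HM; apply: HM; auto. Qed.

Lemma morph_comm x y : H x -> H y -> f (commutator x y) = commutator (f x) (f y).
Proof. by move=> Hx Hy; rewrite /commutator !fM ?morphV; auto. Qed.

Lemma subgroup_itercomm u vs : H u -> List.Forall H vs -> H (itercomm u vs).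
Proof.
move=> Hu Hvs; elim: Hvs u Hu => [//|v vs' Hv _ IH] u Hu /=.
by apply: IH; apply: subgroup_comm.
Qed.

Lemma morph_itercomm u vs : H u -> List.Forall H vs ->
  f (itercomm u vs) = itercomm (f u) (map f vs).
Proof.
move=> Hu Hvs; elim: Hvs u Hu => [//|v vs' Hv _ IH] u Hu /=.
by rewrite -morph_comm // IH //; apply: subgroup_comm.
Qed.

End SubgroupMorphism.

Section CenterAndLowerCentralSeries.
Variable G : group.
Local Notation one := (gone G).
Implicit Types x y g u : G.

Lemma center1 : center (one : G).
Proof. by move=> g; rewrite gmul1g mulg1. Qed.

Lemma centerM x y : center x -> center y -> center (x ** y).
Proof. by move=> cx cy g; rewrite -gmulA cy gmulA cx gmulA. Qed.

Lemma centerV x : center x -> center x^-1.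
Proof. by move=> cx g; apply: (@mulgI _ x); rewrite mulVKg gmulA cx -gmulA mulgV mulg1. Qed.

Lemma center_gzpow x k : center x -> center (gzpow x k).
Proof. exact: (subgroup_gzpow (@center1) (@centerM) (@centerV)). Qed.

Lemma comm1g y : commutator one y = one.
Proof. by rewrite /commutator; gsimpl. Qed.

Lemma comm_eq1 x y : commutator x y = one <-> x ** y = y ** x.
Proof.
rewrite /commutator; split=> [e|->]; last by gsimpl.
by have := f_equal (fun t => y ** x ** t) e; gsimpl.
Qed.

Lemma lcs1 k : lcs k (one : G).
Proof. by case: k => //= k; apply: gen_one. Qed.

Lemma lcsM k x y : lcs k x -> lcs k y -> lcs k (x ** y).
Proof. by case: k => //= k; apply: gen_mul. Qed.

Lemma lcsV k x : lcs k x -> lcs k x^-1.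
Proof. by case: k => //= k; apply: gen_inv. Qed.

Lemma lcs_comm k x y : lcs k x -> lcs k.+1 (commutator x y).
Proof. by move=> lx; apply: gen_base; exists x, y. Qed.

Lemma lcsJ k x g : lcs k x -> lcs k (g^-1 ** x ** g).
Proof.
elim: k x g => [//|k IH] x g /=.
elim=> {x} [x [a [y [la ->]]]| |x y _ lx _ ly|x _ lx].
- apply: gen_base; exists (g^-1 ** a ** g), (g^-1 ** y ** g).
  by split; [apply: IH | rewrite /commutator; gsimpl].
- by rewrite mulg1 gmulVg; apply: gen_one.
- have -> : g^-1 ** (x ** y) ** g = (g^-1 ** x ** g) ** (g^-1 ** y ** g) by gsimpl.
  exact: gen_mul.
- have -> : g^-1 ** x^-1 ** g = (g^-1 ** x ** g)^-1 by gsimpl.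
  exact: gen_inv.
Qed.

Lemma lcs_decr k x : lcs k.+1 x -> lcs k x.
Proof.
case: k => [//|k] /=.
elim=> {x} [x [a [y [la ->]]]| |x y _ lx _ ly|x _ lx].
- have -> : commutator a y = a^-1 ** (y^-1 ** a ** y) by rewrite /commutator; gsimpl.
  by apply: (@lcsM k.+1); [apply: lcsV | apply: lcsJ].
- exact: (@lcs1 k.+1).
- exact: (@lcsM k.+1).
- exact: (@lcsV k.+1).
Qed.

(* Commutators with an element that is not central push a nontrivial element of
   the normal subgroup down the lower central series, which ends at [1]. *)
Lemma normal_subgroup_meets_center (N : G -> Prop) x :
  nilpotent G ->
  (forall x y, N x -> N y -> N (x ** y)) -> (forall x, N x -> N x^-1) ->
  (forall x g, N x -> N (g^-1 ** x ** g)) ->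
  N x -> x <> one -> exists y, [/\ N y, y <> one & center y].
Proof.
move=> [c lcs_c] NM NV NJ.
suff: forall m j x, j + m = c -> lcs j x -> N x -> x <> one ->
    exists y, [/\ N y, y <> one & center y].
  by move=> H; apply: (H c 0%N).
elim=> [|m IH] j {}x; first by rewrite addn0 => -> /lcs_c ->.
move=> jm lx Nx x1.
case: (classic (center x)) => [cx|ncx]; first by exists x.
have [g xg] : exists g, x ** g <> g ** x.
  by apply: NNPP => hn; apply: ncx => g; apply: NNPP => h; apply: hn; exists g.
apply: (IH j.+1 (commutator x g)).
- by rewrite addSnnS.
- exact: lcs_comm.
- by rewrite /commutator -gmulA; apply: NM; [apply: NV | rewrite gmulA; apply: NJ].
- by move/comm_eq1.
Qed.

Lemma last_nontrivial_lcs : nilpotent G -> (exists g, g <> one) ->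
  exists c, (forall g, lcs c.+1 g -> g = one) /\ exists u, lcs c u /\ u <> one.
Proof.
move=> [c lcs_c] [g g1]; elim: c lcs_c => [|c IH] lcs_c; first by case: g1; apply: lcs_c.
case: (classic (exists u, lcs c u /\ u <> one)) => [nt|t]; first by exists c.
by apply: IH => u lu; apply: NNPP => u1; apply: t; exists u.
Qed.

(* Downward induction along the lower central series: [w = [u, y]] commutes with [y], so
   [u^-1 y^-k u = w^k y^-k]; for [k = n.+1] the left side is [y^-k], hence [w^k = 1]. *)
Lemma center_of_center_gpow y n :
  torsion_free G -> nilpotent G -> center (gpow y n.+1) -> center y.
Proof.
move=> tf [c lcs_c] cyn.
suff: forall m j u, j + m = c -> lcs j u -> u ** y = y ** u.
  by move=> H g; symmetry; apply: (H c 0%N).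
elim=> [|m IH] j u; first by rewrite addn0 => -> /lcs_c ->; rewrite gmul1g mulg1.
move=> jm lu; have [w ew] : exists w, w = commutator u y by eexists.
have wy : w ** y = y ** w.
  by rewrite ew; apply: (IH j.+1); [rewrite addSnnS | apply: lcs_comm].
have wyk k : w ** gpow y k = gpow y k ** w.
  by elim: k => [|k IHk] /=; rewrite ?gmul1g ?mulg1 // gmulA wy -gmulA IHk gmulA.
have conj_pow k : u^-1 ** (gpow y k)^-1 ** u = gpow w k ** (gpow y k)^-1.
  elim: k => [|k IHk] /=; first by gsimpl.
  have -> : u^-1 ** (y ** gpow y k)^-1 ** u
            = (u^-1 ** (gpow y k)^-1 ** u) ** (u^-1 ** y^-1 ** u) by gsimpl.
  have -> : u^-1 ** y^-1 ** u = w ** y^-1 by rewrite ew /commutator; gsimpl.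
  have wykV : w ** (gpow y k)^-1 = (gpow y k)^-1 ** w.
    by apply: (@mulgI _ (gpow y k)); apply: (@mulIg _ (gpow y k)); gsimpl; rewrite wyk.
  by rewrite IHk invMg -!gmulA (gmulA _ w) -wykV -!gmulA gmulA -gpowSr /= -gmulA.
have wn1 : gpow w n.+1 = one.
  have := conj_pow n.+1; rewrite -gmulA (centerV cyn u) mulKg => e.
  by apply: (@mulIg _ (gpow y n.+1)^-1); rewrite -e gmul1g.
by apply/comm_eq1; rewrite -ew; apply: tf wn1.
Qed.

Lemma center_of_center_gzpow y k :
  torsion_free G -> nilpotent G -> k <> 0%Z -> center (gzpow y k) -> center y.
Proof.
move=> tf nilp k0 cyk.
have [n n_pos cyn] : exists2 n, 0 < n & center (gpow y n).
  case: k k0 cyk => [//|p|p] _ /= cyk; exists (Pos.to_nat p) => //;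
    try exact/ltP/Pos2Nat.is_pos.
  by rewrite -[gpow _ _]invgK; apply: centerV.
by apply: (@center_of_center_gpow y n.-1); rewrite ?prednK.
Qed.

End CenterAndLowerCentralSeries.

Section IteratedCommutators.
Variable G : group.
Local Notation one := (gone G).
Implicit Types u v g : G.

Lemma itercomm_lcs k u vs : lcs k u -> lcs (k + size vs) (itercomm u vs).
Proof.
elim: vs k u => [|v vs IH] k u lu /=; first by rewrite addn0.
by rewrite -addSnnS; apply: IH; apply: lcs_comm.
Qed.

Lemma itercomm1 vs : itercomm one vs = one.
Proof. by elim: vs => [|v vs IH] //=; rewrite comm1g. Qed.

Variable c : nat.
Hypothesis lcs_trivial : forall g, lcs c.+1 g -> g = one.

Lemma lcs_center u : lcs c u -> center u.
Proof. by move=> lu g; apply/comm_eq1; apply: lcs_trivial; apply: lcs_comm. Qed.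

Lemma itercomm_trivial k u vs : lcs k.+1 u -> k + size vs = c -> itercomm u vs = one.
Proof. by move=> lu e; apply: lcs_trivial; rewrite -e -addSn; apply: itercomm_lcs. Qed.

Lemma itercomm_center k u vs : lcs k u -> k + size vs = c -> center (itercomm u vs).
Proof. by move=> lu e; apply: lcs_center; rewrite -e; apply: itercomm_lcs. Qed.

(* Multiplicativity and conjugation invariance in the first argument are proved together,
   by downward induction along the lower central series. *)
Lemma itercomm_morph_lcs vs k : k + size vs = c ->
  (forall u1 u2, lcs k u1 -> lcs k u2 -> itercomm (u1 ** u2) vs = itercomm u1 vs ** itercomm u2 vs)
  /\ (forall u g, lcs k u -> itercomm (g^-1 ** u ** g) vs = itercomm u vs).
Proof.
elim: vs k => [|v vs IH] k /= e.
  rewrite addn0 in e; subst k; split=> // u g lu.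
  by rewrite -gmulA (lcs_center lu g) mulKg.
have e1 : k.+1 + size vs = c by rewrite addSnnS.
have [IHM IHJ] := IH k.+1 e1.
have itercommM u1 u2 : lcs k u1 -> lcs k u2 -> itercomm (commutator (u1 ** u2) v) vs
    = itercomm (commutator u1 v) vs ** itercomm (commutator u2 v) vs.
  move=> l1 l2.
  have -> : commutator (u1 ** u2) v = (u2^-1 ** commutator u1 v ** u2) ** commutator u2 v.
    by rewrite /commutator; gsimpl.
  have c1 := lcs_comm v l1; have c2 := lcs_comm v l2.
  by rewrite IHM ?IHJ //; apply: lcsJ.
split=> // u g lu.
have -> : g^-1 ** u ** g = u ** commutator u g by rewrite /commutator; gsimpl.
rewrite itercommM //; last by apply: lcs_decr; apply: lcs_comm.
have l2 : lcs k.+2 (commutator (commutator u g) v) by do 2 apply: lcs_comm.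
by rewrite (itercomm_trivial l2 e1) mulg1.
Qed.

Lemma itercommMl k u1 u2 vs : k + size vs = c -> lcs k u1 -> lcs k u2 ->
  itercomm (u1 ** u2) vs = itercomm u1 vs ** itercomm u2 vs.
Proof. by move=> e l1 l2; case: (itercomm_morph_lcs e) => ->. Qed.

Lemma itercommJl k u g vs : k + size vs = c -> lcs k u ->
  itercomm (g^-1 ** u ** g) vs = itercomm u vs.
Proof. by move=> e lu; case: (itercomm_morph_lcs e) => _ ->. Qed.

Lemma itercommMr k u v1 v2 vs : k + (size vs).+1 = c -> lcs k u ->
  itercomm u ((v1 ** v2) :: vs) = itercomm u (v1 :: vs) ** itercomm u (v2 :: vs).
Proof.
move=> e lu /=; have e1 : k.+1 + size vs = c by rewrite addSnnS.
have -> : commutator u (v1 ** v2) = commutator u v2 ** (v2^-1 ** commutator u v1 ** v2).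
  by rewrite /commutator; gsimpl.
have l1 := lcs_comm v1 lu; have l2 := lcs_comm v2 lu.
rewrite (itercommMl e1) ?(itercommJl _ e1) //; last exact: lcsJ.
exact: (itercomm_center l2 e1).
Qed.

Lemma itercomm_gpowl u n vs : size vs = c -> itercomm (gpow u n) vs = gpow (itercomm u vs) n.
Proof.
move=> e; have fM x y : lcs 0 x -> lcs 0 y -> itercomm (x ** y) vs = itercomm x vs ** itercomm y vs.
  exact: (@itercommMl 0 x y vs e).
exact: (@morph_gpow _ _ (fun x => itercomm x vs) (@lcs1 _ 0) (@lcsM _ 0) fM u n I).
Qed.

Lemma itercomm_gpowr k u v n vs : k + (size vs).+1 = c -> lcs k u ->
  itercomm u (gpow v n :: vs) = gpow (itercomm u (v :: vs)) n.
Proof.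
move=> e lu.
have fM x y : lcs 0 x -> lcs 0 y ->
    itercomm u ((x ** y) :: vs) = itercomm u (x :: vs) ** itercomm u (y :: vs).
  by move=> _ _; apply: itercommMr e lu.
exact: (@morph_gpow _ _ (fun v => itercomm u (v :: vs)) (@lcs1 _ 0) (@lcsM _ 0) fM v n I).
Qed.

(* [lcs c] is generated by the values [itercomm u vs] with [size vs = c], and these are
   multiplicative in [u]. *)
Lemma exists_nontrivial_itercomm : (exists u, lcs c u /\ u <> one) ->
  exists u vs, size vs = c /\ itercomm u vs <> one.
Proof.
move=> [u [lu u1]]; apply: NNPP => all1; apply: u1.
suff: forall k u vs, lcs k u -> k + size vs = c -> itercomm u vs = one.
  by move=> H; apply: (H c u [::]); rewrite ?addn0.
elim=> [|k IH] {lu}u vs lu e.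
  by apply: NNPP => ne; apply: all1; exists u, vs.
elim: lu => {u} [x [a [y [la ->]]]| |x y lx ex ly ey|x lx ex].
- by apply: (IH a (y :: vs) la); rewrite addnS -addSn.
- exact: itercomm1.
- by rewrite (itercommMl e lx ly) ex ey mulg1.
- apply: (@mulIg _ (itercomm x vs)).
  by rewrite -(itercommMl e) ?gmulVg ?itercomm1 ?ex ?mulg1 //; apply: gen_inv.
Qed.

(* Multilinearity: replacing an argument by a power [n.+1] raises the value to that power,
   which keeps it nontrivial in a torsion-free group. *)
Lemma exists_nontrivial_itercomm_in (P : G -> Prop) :
  torsion_free G -> (forall x y, P x -> P y -> P (x ** y)) -> (forall x, P x -> P x^-1) ->
  (forall g, exists n, P (gpow g n.+1)) -> (exists u, lcs c u /\ u <> one) ->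
  exists u vs, [/\ P u, List.Forall P vs, size vs = c & itercomm u vs <> one].
Proof.
move=> tf PM PV Ppow nt.
have pow_neq1 x n : x <> one -> gpow x n.+1 <> one by move=> x1 /tf.
have [g [gs [e ne]]] := exists_nontrivial_itercomm nt.
have [n Pgn] := Ppow g.
suff: forall vs k u, lcs k u -> k + size vs = c -> P u -> itercomm u vs <> one ->
    exists hs, [/\ List.Forall P hs, size hs = size vs & itercomm u hs <> one].
  move=> H; have [|hs [Phs sz ne']] := H gs 0%N _ I e Pgn.
    by rewrite itercomm_gpowl //; apply: pow_neq1.
  by exists (gpow g n.+1), hs; rewrite sz.
elim=> [|v vs IH] k u lu ek Pu ne_u; first by exists [::].
have [m Pvm] := Ppow v.
have e1 : k.+1 + size vs = c by rewrite addSnnS.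
have Pc : P (commutator u (gpow v m.+1)) := PM _ _ (PM _ _ (PV _ Pu) (PV _ Pvm)) (PM _ _ Pu Pvm).
have nc : itercomm (commutator u (gpow v m.+1)) vs <> one.
  by have := pow_neq1 _ m ne_u; rewrite -(itercomm_gpowr _ _ ek lu).
have [hs [Phs sz ne']] := IH k.+1 _ (lcs_comm _ lu) e1 Pc nc.
by exists (gpow v m.+1 :: hs); split=> //=; [constructor | rewrite sz].
Qed.

End IteratedCommutators.

Lemma Z_subgroup_generator (S : Z -> Prop) m :
  (forall k l, S k -> S l -> S (k + l)%Z) -> (forall k, S k -> S (- k)%Z) -> S m -> m <> 0%Z ->
  exists2 d, (0 < d)%Z & S d /\ forall k, S k -> (d | k)%Z.
Proof.
move=> SD SN Sm m0.
have S_mul d q : S d -> S (d * q)%Z.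
  move=> Sd; elim/Z.peano_ind: q => [|q IH|q IH].
  - by rewrite Z.mul_0_r -(Z.add_opp_diag_r m); apply: SD => //; apply: SN.
  - by rewrite Z.mul_succ_r; apply: SD.
  - by rewrite Z.mul_pred_r; apply: SD => //; apply: SN.
have pos : exists n, (0 < n)%coq_nat /\ S (Z.of_nat n).
  exists (Z.to_nat (Z.abs m)); split; first lia.
  rewrite Z2Nat.id; last lia.
  by case: (Z.abs_spec m) => -[_ ->] //; apply: SN.
have [n [[[n_pos Sn] n_min] _]] :=
  dec_inh_nat_subset_has_unique_least_element _ (fun n => classic _) pos.
exists (Z.of_nat n); first lia.
split=> // k Sk; apply/Z.mod_divide; first lia.
set r := (k mod Z.of_nat n)%Z.
have r_bound : (0 <= r < Z.of_nat n)%Z by apply: Z.mod_pos_bound; lia.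
have Sr : S r.
  by rewrite /r Z.mod_eq; [apply: SD => //; apply: SN; apply: S_mul | lia].
apply: NNPP => r0.
have /n_min : (0 < Z.to_nat r)%coq_nat /\ S (Z.of_nat (Z.to_nat r)).
  by rewrite Z2Nat.id; [split=> //; lia | lia].
lia.
Qed.

Lemma exists_common_multiple (A : finType) (P : A -> Z -> Prop) :
  (forall a d k, P a d -> P a (d * k)%Z) -> (forall a, exists2 d, d <> 0%Z & P a d) ->
  exists2 L, L <> 0%Z & forall a, P a L.
Proof.
move=> P_mul P_ex.
suff [L L0 PL] : exists2 L, L <> 0%Z & forall a, a \in enum A -> P a L.
  by exists L => // a; apply: PL; rewrite mem_enum.
elim: (enum A) => [|a s [L L0 PL]]; first by exists 1%Z.
have [d d0 Pd] := P_ex a.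
exists (d * L)%Z; first lia.
move=> x; rewrite in_cons => /predU1P [->|xs]; first exact: P_mul.
by rewrite Z.mul_comm; apply: P_mul; apply: PL.
Qed.

Section SelfSimilarAction.
Variables (G : group) (A : finType) (act : G -> (nat -> A) -> nat -> A).
Hypotheses (act_action : is_action act) (act_faithful : faithful_action act)
           (act_self_similar : self_similar_action act).
Local Notation one := (gone G).
Implicit Types (g h : G) (a : A) (w : nat -> A).

Lemma section_ex g a : exists p : G * A, forall w, act g (scons a w) = scons p.2 (act p.1 w).
Proof. by have [h [b e]] := act_self_similar g a; exists (h, b). Qed.

Definition section_data g a : G * A :=
  proj1_sig (constructive_indefinite_description _ (section_ex g a)).

Definition lact g a : A := (section_data g a).2.

Definition sec g a : G := (section_data g a).1.

Lemma actE g a w : act g (scons a w) = scons (lact g a) (act (sec g a) w).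
Proof. exact: (proj2_sig (constructive_indefinite_description _ (section_ex g a))). Qed.

Lemma act1 w : act one w = w.
Proof. by case: act_action. Qed.

Lemma actM g h w : act (g ** h) w = act g (act h w).
Proof. by case: act_action. Qed.

Lemma act_inj g h : (forall w, act g w = act h w) -> g = h.
Proof.
move=> e; apply: mulgV_eq1; apply: act_faithful => w.
by rewrite actM e -actM mulgV act1.
Qed.

Lemma scons_eta w : w = scons (w 0) (fun n => w n.+1).
Proof. by apply: functional_extensionality => -[]. Qed.

Lemma lact_sec_unique g a b h :
  (forall w, act g (scons a w) = scons b (act h w)) -> lact g a = b /\ sec g a = h.
Proof.
move=> e; have {}e w : scons (lact g a) (act (sec g a) w) = scons b (act h w).
  by rewrite -actE.
split; first exact: (f_equal (fun w => w 0) (e (fun _ => a))).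
apply: act_inj => w; apply: functional_extensionality => n.
exact: (f_equal (fun w => w n.+1) (e w)).
Qed.

Lemma lact_secM g h a :
  lact (g ** h) a = lact g (lact h a) /\ sec (g ** h) a = sec g (lact h a) ** sec h a.
Proof. by apply: lact_sec_unique => w; rewrite actM !actE actM. Qed.

Lemma lactM g h a : lact (g ** h) a = lact g (lact h a).
Proof. by case: (lact_secM g h a). Qed.

Lemma secM g h a : sec (g ** h) a = sec g (lact h a) ** sec h a.
Proof. by case: (lact_secM g h a). Qed.

Lemma lact_sec1 a : lact one a = a /\ sec one a = one.
Proof. by apply: lact_sec_unique => w; rewrite !act1. Qed.

Lemma lact1 a : lact one a = a.
Proof. by case: (lact_sec1 a). Qed.

Lemma sec1 a : sec one a = one.
Proof. by case: (lact_sec1 a). Qed.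

Lemma lactK g a : lact g^-1 (lact g a) = a.
Proof. by rewrite -lactM gmulVg lact1. Qed.

Lemma lactVK g a : lact g (lact g^-1 a) = a.
Proof. by rewrite -lactM mulgV lact1. Qed.

Lemma sec_stabM g h a : lact h a = a -> sec (g ** h) a = sec g a ** sec h a.
Proof. by move=> ha; rewrite secM ha. Qed.

Definition fixes_letters g := forall a, lact g a = a.

Lemma fixes_letters1 : fixes_letters one.
Proof. exact: lact1. Qed.

Lemma fixes_lettersM g h : fixes_letters g -> fixes_letters h -> fixes_letters (g ** h).
Proof. by move=> fg fh a; rewrite lactM fh fg. Qed.

Lemma fixes_lettersV g : fixes_letters g -> fixes_letters g^-1.
Proof. by move=> fg a; rewrite -{1}(fg a) lactK. Qed.

(* Pigeonhole on the finitely many maps [A -> A]. *)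
Lemma fixes_letters_gpow g : exists n, fixes_letters (gpow g n.+1).
Proof.
pose f (i : 'I_#|{ffun A -> A}|.+1) := [ffun a => lact (gpow g i) a].
have [i [j [ij fij]]] : exists i j : 'I_#|{ffun A -> A}|.+1, (i < j)%N /\ f i = f j.
  apply: NNPP => hn; have /leq_card : injective f.
    move=> i j fij; apply: val_inj; case: (ltngtP i j) => // ij.
    - by case: hn; exists i, j.
    - by case: hn; exists j, i.
  by rewrite card_ord ltnn.
exists (j - i).-1; rewrite prednK ?subn_gt0 // => a.
have := congr1 (fun F : {ffun A -> A} => F (lact (gpow g i)^-1 a)) fij.
rewrite /f /= !ffunE lactVK.
have -> : gpow g j = gpow g (j - i) ** gpow g i by rewrite -gpowD subnK // ltnW.
by rewrite lactM lactVK => /esym.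
Qed.

Lemma sec_stab_gzpow g a k : lact g a = a ->
  lact (gzpow g k) a = a /\ sec (gzpow g k) a = gzpow (sec g a) k.
Proof.
move=> ga; have H1 : lact one a = a := lact1 a.
have HM x y : lact x a = a -> lact y a = a -> lact (x ** y) a = a.
  by move=> xa ya; rewrite lactM ya xa.
have HV x : lact x a = a -> lact x^-1 a = a by move=> xa; rewrite -{1}xa lactK.
have fM x y : lact x a = a -> lact y a = a -> sec (x ** y) a = sec x a ** sec y a.
  by move=> _; apply: sec_stabM.
by split; [apply: (subgroup_gzpow H1 HM HV) | apply: (morph_gzpow H1 HM HV fM)].
Qed.

Definition self_replicating_at g a := lact g a = a /\ exists r, sec g a = gzpow g r.

Lemma self_replicating_gzpow g a k :
  self_replicating_at g a -> self_replicating_at (gzpow g k) a.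
Proof.
move=> [ga [r sga]]; have [gka sgka] := sec_stab_gzpow k ga.
by split=> //; exists r; rewrite sgka sga !gzpowM Z.mul_comm.
Qed.

Lemma self_replicating_trivial g : (forall a, self_replicating_at g a) -> g = one.
Proof.
move=> sr; apply: act_faithful => w; apply: functional_extensionality => n.
elim: n g sr w => [|n IH] g sr w; rewrite [in act _ w](scons_eta w) actE;
  have [ga [r ->]] := sr (w 0); first by rewrite ga.
by apply: IH => a; apply: self_replicating_gzpow.
Qed.

Lemma exists_center_with_central_sections :
  torsion_free G -> nilpotent G -> (exists g, g <> one) ->
  exists y, [/\ y <> one, center y, fixes_letters y & forall a, center (sec y a)].
Proof.
move=> tf nilp ntG.
have [c [lcs_c nt]] := last_nontrivial_lcs nilp ntG.
have [u [vs [Pu Pvs sz ne]]] := exists_nontrivial_itercomm_in lcs_c tf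
  (@fixes_lettersM) (@fixes_lettersV) fixes_letters_gpow nt.
exists (itercomm u vs); split=> //.
- exact: (@itercomm_center _ _ lcs_c 0).
- exact: (subgroup_itercomm (@fixes_lettersM) (@fixes_lettersV) Pu Pvs).
move=> a; have fM x y : fixes_letters x -> fixes_letters y -> sec (x ** y) a = sec x a ** sec y a.
  by move=> _ fy; apply: sec_stabM.
rewrite (morph_itercomm fixes_letters1 (@fixes_lettersM) (@fixes_lettersV) fM) //.
by apply: (@itercomm_center _ _ lcs_c 0); rewrite ?size_map.
Qed.

Section OrbitAction.
Variable b : A.

Definition in_orbit (x : A) : bool :=
  if excluded_middle_informative (exists g, lact g b = x) then true else false.

Lemma in_orbitP x : reflect (exists g, lact g b = x) (in_orbit x).
Proof. by rewrite /in_orbit; case: excluded_middle_informative => h; constructor. Qed.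

Definition orbit : finType := {x : A | in_orbit x}.
Implicit Types (x y : orbit) (u : nat -> orbit).

Lemma in_orbit_lact g x : in_orbit (lact g (val x)).
Proof.
have /in_orbitP [h <-] := valP x.
by apply/in_orbitP; exists (g ** h); rewrite lactM.
Qed.

Definition oact g x : orbit := exist _ (lact g (val x)) (in_orbit_lact g x).

Definition orbit_base : orbit := exist _ b (introT (in_orbitP b) (ex_intro _ one (lact1 b))).

Lemma oact1 x : oact one x = x.
Proof. by apply: val_inj; rewrite /= lact1. Qed.

Lemma oactM g h x : oact (g ** h) x = oact g (oact h x).
Proof. by apply: val_inj; rewrite /= lactM. Qed.

Definition transversal x : G :=
  proj1_sig (constructive_indefinite_description _ (elimT (in_orbitP _) (valP x))).

Lemma transversalP x : lact (transversal x) b = val x.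
Proof.
exact: (proj2_sig (constructive_indefinite_description _ (elimT (in_orbitP _) (valP x)))).
Qed.

Definition orbit_sec g x : G := sec ((transversal (oact g x))^-1 ** g ** transversal x) b.

Lemma orbit_sec1 x : orbit_sec one x = one.
Proof. by rewrite /orbit_sec oact1 mulg1 gmulVg sec1. Qed.

Lemma orbit_secM g h x : orbit_sec (g ** h) x = orbit_sec g (oact h x) ** orbit_sec h x.
Proof.
rewrite /orbit_sec -sec_stabM; last first.
  by rewrite !lactM transversalP -[lact h _]/(val (oact h x)) -transversalP lactK.
by congr sec; rewrite oactM; gsimpl.
Qed.

Fixpoint orbit_act_at (n : nat) (g : G) (u : nat -> orbit) : orbit :=
  if n is k.+1 then orbit_act_at k (orbit_sec g (u 0)) (fun i => u i.+1) else oact g (u 0).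

Definition orbit_act g u n := orbit_act_at n g u.

Lemma orbit_act1 u : orbit_act one u = u.
Proof.
apply: functional_extensionality => n; rewrite /orbit_act.
by elim: n u => [|n IH] u /=; rewrite ?oact1 // orbit_sec1 IH.
Qed.

Lemma orbit_actM g h u : orbit_act (g ** h) u = orbit_act g (orbit_act h u).
Proof.
apply: functional_extensionality => n; rewrite /orbit_act.
by elim: n g h u => [|n IH] g h u /=; rewrite ?oactM // orbit_secM IH.
Qed.

Lemma orbit_act_action : is_action orbit_act.
Proof. by split; [apply: orbit_act1 | apply: orbit_actM]. Qed.

Lemma orbit_act_self_similar : self_similar_action orbit_act.
Proof.
move=> g x; exists (orbit_sec g x), (oact g x) => u.
by apply: functional_extensionality => -[].
Qed.

Lemma orbit_act_transitive : transitive_action orbit_act.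
Proof.
move=> x y; exists (transversal y ** (transversal x)^-1) => u.
by apply: val_inj; rewrite /= lactM -transversalP lactK transversalP.
Qed.

Definition orbit_kernel g := forall u, orbit_act g u = u.

Lemma orbit_kernelM g h : orbit_kernel g -> orbit_kernel h -> orbit_kernel (g ** h).
Proof. by move=> kg kh u; rewrite orbit_actM kh kg. Qed.

Lemma orbit_kernelV g : orbit_kernel g -> orbit_kernel g^-1.
Proof. by move=> kg u; rewrite -{1}(kg u) -orbit_actM gmulVg orbit_act1. Qed.

Lemma orbit_kernelJ g h : orbit_kernel g -> orbit_kernel (h^-1 ** g ** h).
Proof. by move=> kg u; rewrite !orbit_actM kg -orbit_actM gmulVg orbit_act1. Qed.

Lemma orbit_kernel_fixes g : orbit_kernel g -> lact g b = b.
Proof. by move=> kg; have := congr1 (fun u => val (u 0)) (kg (fun _ => orbit_base)). Qed.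

(* For central [g] the stabilizing element [t_b^-1 g t_b] is [g] itself. *)
Lemma orbit_kernel_sec g : orbit_kernel g -> center g -> orbit_kernel (sec g b).
Proof.
move=> kg cg u; apply: functional_extensionality => n.
have gb : oact g orbit_base = orbit_base by apply: val_inj; apply: orbit_kernel_fixes.
have := congr1 (fun u => u n.+1) (kg (scons orbit_base u)).
by rewrite /orbit_act /= /orbit_sec gb -gmulA cg gmulA gmulVg gmul1g.
Qed.

End OrbitAction.

Variable z : G.
Hypotheses (tf : torsion_free G) (nilp : nilpotent G) (cz : center z)
  (z_inj : forall m n : Z, gzpow z m = gzpow z n -> m = n)
  (z_gen : forall y : G, center y -> exists n : Z, y = gzpow z n).

Lemma gzpow_z_neq1 k : k <> 0%Z -> gzpow z k <> one.
Proof. by move=> k0 zk; apply: k0; apply: z_inj; rewrite zk. Qed.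

Lemma orbit_kernel_self_replicating b :
  ~ faithful_action (@orbit_act b) -> exists2 d, d <> 0%Z & self_replicating_at (gzpow z d) b.
Proof.
move=> nf.
have [g kg g1] : exists2 g, orbit_kernel b g & g <> one.
  by apply: NNPP => h; apply: nf => g kg; apply: NNPP => g1; apply: h; exists g.
have [y [ky y1 cy]] := normal_subgroup_meets_center nilp (@orbit_kernelM b)
  (@orbit_kernelV b) (@orbit_kernelJ b) kg g1.
have [m em] := z_gen cy.
have kD k l : orbit_kernel b (gzpow z k) -> orbit_kernel b (gzpow z l) ->
    orbit_kernel b (gzpow z (k + l)).
  by rewrite gzpowD; apply: orbit_kernelM.
have kN k : orbit_kernel b (gzpow z k) -> orbit_kernel b (gzpow z (- k)).
  by rewrite gzpowN; apply: orbit_kernelV.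
have km : orbit_kernel b (gzpow z m) by rewrite -em.
have m_neq0 : m <> 0%Z by move=> m0; apply: y1; rewrite em m0.
have [d d_pos [kd d_min]] := Z_subgroup_generator kD kN km m_neq0.
have zdb : lact (gzpow z d) b = b := orbit_kernel_fixes kd.
have z1 : z <> one by rewrite -(gzpow1 z); apply: gzpow_z_neq1.
have [y0 [y01 cy0 fy0 csy0]] := exists_center_with_central_sections tf nilp (ex_intro _ z z1).
have [m0 em0] := z_gen cy0.
have m0_neq0 : m0 <> 0%Z by move=> m00; apply: y01; rewrite em0 m00.
have c_sec : center (sec (gzpow z d) b).
  apply: (center_of_center_gzpow tf nilp m0_neq0).
  have [_ <-] := sec_stab_gzpow m0 zdb.
  rewrite gzpowM Z.mul_comm -gzpowM -em0.
  by have [_ ->] := sec_stab_gzpow d (fy0 b); apply/center_gzpow/csy0.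
have [s es] := z_gen c_sec.
have [r sr] : (d | s)%Z.
  by apply: d_min; rewrite -es; apply: orbit_kernel_sec => //; apply/center_gzpow/cz.
by exists d; [lia | split=> //; exists r; rewrite es sr gzpowM Z.mul_comm].
Qed.

Lemma exists_faithful_orbit_action : exists b, faithful_action (@orbit_act b).
Proof.
apply: NNPP => nf.
have [|a|L L0 srL] := @exists_common_multiple A (fun a d => self_replicating_at (gzpow z d) a).
- by move=> a d k; rewrite -gzpowM; apply: self_replicating_gzpow.
- by apply: orbit_kernel_self_replicating => fa; apply: nf; exists a.
exact: gzpow_z_neq1 L0 (self_replicating_trivial srL).
Qed.

End SelfSimilarAction.

Theorem lemma24 (G : group) :
  finitely_generated G -> torsion_free G -> nilpotent G -> center_iso_Z G ->
  self_similar G -> transitive_self_similar G.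
Proof.
move=> _ tf nilp [z [cz [z_inj z_gen]]] [A [act [act_action [act_faithful act_ss]]]].
have [b faithful_b] := exists_faithful_orbit_action act_action act_faithful act_ss
  tf nilp cz z_inj z_gen.
exists (orbit act_ss b), (@orbit_act _ _ _ act_action act_faithful act_ss b).
split; last split; last split.
- exact: orbit_act_action.
- exact: faithful_b.
- exact: orbit_act_self_similar.
- exact: orbit_act_transitive.
Qed.
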